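(* The syntactic pomset automaton $A_\Sigma$ is fork-acyclic.
   Context: Fix a finite alphabet $\Sigma$. The set $\mathcal{T}$ of sr-expressions is generated by $e, f ::= 0 \mid 1 \mid \mathtt{a}\in\Sigma \mid e+f \mid e\cdot f \mid e\parallel f \mid e^*$. $\mathcal{F}\subseteq\mathcal{T}$ is the smallest set with $1\in\mathcal{F}$; $e+f\in\mathcal{F}$ if $e\in\mathcal{F}$ or $f\in\mathcal{F}$; $e\cdot f, e\parallel f\in\mathcal{F}$ if $e,f\in\mathcal{F}$; and $e^*\in\mathcal{F}$ for all $e$. A pomset automaton (PA) is a tuple $\langle Q,F,\delta,\gamma\rangle$ with states $Q$, accepting states $F\subseteq Q$, $\delta: Q\times\Sigma\to 2^Q$ and $\gamma: Q\times\mathbb{M}(Q)\to 2^Q$ (with $\mathbb{M}(Q)$ the finite multisets over $Q$), such that for each $q$ only finitely many $\phi$ have $\gamma(q,\phi)\neq\emptyset$. The support relation $\preceq$ is the smallest preorder on $Q$ with $q'\preceq q$ whenever $q'\in\delta(q,\mathtt a)$ for some $\mathtt a$, or $q'\in\gamma(q,\phi)$ for some $\phi$, or $q'\in\phi$ for some $\phi$ with $\gamma(q,\phi)\neq\emptyset$. Write $q'\prec q$ if $q'\preceq q$ and $q\not\preceq q'$. The PA is fork-acyclic if whenever $r\in\phi$ and $\gamma(q,\phi)\neq\emptyset$, we have $r\prec q$. For $e\in\mathcal{T}$ and $T\subseteq\mathcal{T}$, let $e\star T = T$ if $e\in\mathcal{F}$ and $\emptyset$ otherwise. The derivatives $\delta_\Sigma:\mathcal{T}\times\Sigma\to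 2^{\mathcal{T}}$ and $\gamma_\Sigma:\mathcal{T}\times\mathbb{M}(\mathcal{T})\to 2^{\mathcal{T}}$ are defined by: $\delta_\Sigma(0,\mathtt a)=\delta_\Sigma(1,\mathtt a)=\emptyset$; $\delta_\Sigma(\mathtt b,\mathtt a)=\{1 : \mathtt a=\mathtt b\}$; $\delta_\Sigma(e+f,\mathtt a)=\delta_\Sigma(e,\mathtt a)\cup\delta_\Sigma(f,\mathtt a)$; $\delta_\Sigma(e\cdot f,\mathtt a)=\{g\cdot f : g\in\delta_\Sigma(e,\mathtt a)\}\cup e\star\delta_\Sigma(f,\mathtt a)$; $\delta_\Sigma(e\parallel f,\mathtt a)=\emptyset$; $\delta_\Sigma(e^*,\mathtt a)=\{g\cdot e^* : g\in\delta_\Sigma(e,\mathtt a)\}$; and $\gamma_\Sigma(0,\phi)=\gamma_\Sigma(1,\phi)=\gamma_\Sigma(\mathtt b,\phi)=\emptyset$; $\gamma_\Sigma(e+f,\phi)=\gamma_\Sigma(e,\phi)\cup\gamma_\Sigma(f,\phi)$; $\gamma_\Sigma(e\cdot f,\phi)=\{g\cdot f: g\in\gamma_\Sigma(e,\phi)\}\cup e\star\gamma_\Sigma(f,\phi)$; $\gamma_\Sigma(e\parallel f,\phi)=\{1 : \phi=\{\!\{e,f\}\!\}\}$; $\gamma_\Sigma(e^*,\phi)=\{g\cdot e^* : g\in\gamma_\Sigma(e,\phi)\}$. The syntactic PA is $A_\Sigma=\langle\mathcal{T},\mathcal{F},\delta_\Sigma,\gamma_\Sigma\rangle$. *)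

From mathcomp Require Import ssreflect ssrbool eqtype fintype.
From Stdlib Require Import List Permutation Relations.

Set Implicit Arguments.
Unset Strict Implicit.

(* Finite multisets over Q are represented as lists modulo permutation
   ([Permutation]); membership in a multiset is list membership [In].
   Subsets of Q (elements of 2^Q) are predicates Q -> Prop. *)

(** Pomset automata (the finiteness side condition on gamma is not needed
    to define support / fork-acyclicity, and is stated separately). *)
Record PA (Sigma : Type) := mkPA {
  pa_Q : Type;
  pa_F : pa_Q -> Prop;
  pa_delta : pa_Q -> Sigma -> pa_Q -> Prop;          (* q' \in delta(q,a) *)
  pa_gamma : pa_Q -> list pa_Q -> pa_Q -> Prop       (* q' \in gamma(q,phi) *)
}.
Arguments pa_Q {Sigma} p.
Arguments pa_F {Sigma} p _.
Arguments pa_delta {Sigma} p _ _ _.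
Arguments pa_gamma {Sigma} p _ _ _.

Definition gamma_multiset (Sigma : Type) (A : PA Sigma) : Prop :=
  forall q phi psi q', Permutation phi psi ->
    pa_gamma A q phi q' -> pa_gamma A q psi q'.

Definition gamma_finite (Sigma : Type) (A : PA Sigma) : Prop :=
  forall q, exists l : list (list (pa_Q A)),
    forall phi, (exists q', pa_gamma A q phi q') ->
      exists psi, In psi l /\ Permutation phi psi.

Definition support_step (Sigma : Type) (A : PA Sigma) (q' q : pa_Q A) : Prop :=
  (exists a, pa_delta A q a q') \/
  (exists phi, pa_gamma A q phi q') \/
  (exists phi, In q' phi /\ exists r, pa_gamma A q phi r).

Definition supports (Sigma : Type) (A : PA Sigma) : relation (pa_Q A) :=
  clos_refl_trans (pa_Q A) (@support_step Sigma A).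

Definition strictly_supports (Sigma : Type) (A : PA Sigma) (q' q : pa_Q A) : Prop :=
  @supports Sigma A q' q /\ ~ @supports Sigma A q q'.

Definition fork_acyclic (Sigma : Type) (A : PA Sigma) : Prop :=
  forall (q : pa_Q A) (phi : list (pa_Q A)) (r : pa_Q A),
    In r phi -> (exists s, pa_gamma A q phi s) -> @strictly_supports Sigma A r q.

Inductive term (Sigma : Type) : Type :=
| T0 : term Sigma
| T1 : term Sigma
| Tlet : Sigma -> term Sigma
| Tplus : term Sigma -> term Sigma -> term Sigma
| Tseq : term Sigma -> term Sigma -> term Sigma
| Tpar : term Sigma -> term Sigma -> term Sigma
| Tstar : term Sigma -> term Sigma.

Arguments T0 {Sigma}.
Arguments T1 {Sigma}.

(** the set F of expressions accepting the empty pomset *)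
Inductive accepting (Sigma : Type) : term Sigma -> Prop :=
| acc_one : accepting T1
| acc_plusl e f : accepting e -> accepting (Tplus e f)
| acc_plusr e f : accepting f -> accepting (Tplus e f)
| acc_seq e f : accepting e -> accepting f -> accepting (Tseq e f)
| acc_par e f : accepting e -> accepting f -> accepting (Tpar e f)
| acc_star e : accepting (Tstar e).

Fixpoint deltaS (Sigma : Type) (e : term Sigma) (a : Sigma) : term Sigma -> Prop :=
  match e with
  | T0 => fun _ => False
  | T1 => fun _ => False
  | Tlet b => fun h => a = b /\ h = T1
  | Tplus e1 e2 => fun h => deltaS e1 a h \/ deltaS e2 a h
  | Tseq e1 e2 => fun h =>
      (exists g, deltaS e1 a g /\ h = Tseq g e2) \/ (accepting e1 /\ deltaS e2 a h)
  | Tpar _ _ => fun _ => False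
  | Tstar e1 => fun h => exists g, deltaS e1 a g /\ h = Tseq g (Tstar e1)
  end.

Fixpoint gammaS (Sigma : Type) (e : term Sigma) (phi : list (term Sigma))
  : term Sigma -> Prop :=
  match e with
  | T0 => fun _ => False
  | T1 => fun _ => False
  | Tlet _ => fun _ => False
  | Tplus e1 e2 => fun h => gammaS e1 phi h \/ gammaS e2 phi h
  | Tseq e1 e2 => fun h =>
      (exists g, gammaS e1 phi g /\ h = Tseq g e2) \/ (accepting e1 /\ gammaS e2 phi h)
  | Tpar e1 e2 => fun h => Permutation phi (e1 :: e2 :: nil) /\ h = T1
  | Tstar e1 => fun h => exists g, gammaS e1 phi g /\ h = Tseq g (Tstar e1)
  end.

Definition syntacticPA (Sigma : finType) : PA Sigma :=
  @mkPA Sigma (term Sigma) (@accepting Sigma) (@deltaS Sigma) (@gammaS Sigma).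

From mathcomp Require Import ssreflect ssrbool eqtype fintype.
From Stdlib Require Import List Permutation Relations Lia.

Set Implicit Arguments.

(* The nesting depth of parallel composition is a rank on expressions that
   derivatives never increase, while the operands of a fork always have
   strictly smaller depth than the expression that forks.  Hence the depth is
   monotone along the support preorder, and an operand r of a fork at q
   cannot support q: that would force depth q <= depth r < depth q. *)

Section RankedPA.

Variables (Sigma : Type) (A : PA Sigma) (rank : pa_Q A -> nat).

Hypothesis rank_delta : forall q a q', pa_delta A q a q' -> rank q' <= rank q.
Hypothesis rank_gamma : forall q phi q', pa_gamma A q phi q' -> rank q' <= rank q.
Hypothesis rank_fork :
  forall q phi s, pa_gamma A q phi s -> forall r, In r phi -> rank r < rank q.

Lemma support_step_rank_le q' q : @support_step _ A q' q -> rank q' <= rank q.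
Proof.
case=> [[a /rank_delta] | [[phi /rank_gamma] | [phi [r_phi [s /rank_fork]]]]] //.
by move=> /(_ q' r_phi); lia.
Qed.

Lemma supports_rank_le q' q : @supports _ A q' q -> rank q' <= rank q.
Proof.
elim=> [x y /support_step_rank_le | x | x y z _ ? _ ?] //; lia.
Qed.

Lemma fork_acyclic_of_rank : fork_acyclic A.
Proof.
move=> q phi r r_phi [s q_fork]; split.
- by apply: rt_step; right; right; exists phi; split; last exists s.
- by move=> /supports_rank_le; move: q_fork => /rank_fork /(_ r r_phi); lia.
Qed.

End RankedPA.

Fixpoint par_depth (Sigma : Type) (e : term Sigma) : nat :=
  match e with
  | T0 | T1 | Tlet _ => 0
  | Tplus e1 e2 | Tseq e1 e2 => Nat.max (par_depth e1) (par_depth e2)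
  | Tpar e1 e2 => S (Nat.max (par_depth e1) (par_depth e2))
  | Tstar e1 => par_depth e1
  end.

Section ParDepth.

Variable Sigma : Type.
Implicit Types (e h : term Sigma) (phi : list (term Sigma)).

Lemma par_depth_delta e a h : deltaS e a h -> par_depth h <= par_depth e.
Proof.
elim: e h => [||b|e1 IH1 e2 IH2|e1 IH1 e2 IH2|//|e1 IH1] h //=.
- by case=> _ ->.
- by case=> [/IH1 | /IH2]; lia.
- by case=> [[g [/IH1 ? ->]] | [_ /IH2]] /=; lia.
- by case=> g [/IH1 ? ->] /=; lia.
Qed.

Lemma par_depth_gamma e phi h : gammaS e phi h -> par_depth h <= par_depth e.
Proof.
elim: e h => [|||e1 IH1 e2 IH2|e1 IH1 e2 IH2|e1 _ e2 _|e1 IH1] h //=.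
- by case=> [/IH1 | /IH2]; lia.
- by case=> [[g [/IH1 ? ->]] | [_ /IH2]] /=; lia.
- by case=> _ -> /=; lia.
- by case=> g [/IH1 ? ->] /=; lia.
Qed.

Lemma par_depth_fork e phi h :
  gammaS e phi h -> forall r, In r phi -> par_depth r < par_depth e.
Proof.
elim: e h => [|||e1 IH1 e2 IH2|e1 IH1 e2 IH2|e1 _ e2 _|e1 IH1] h //= + r r_phi.
- by case=> [/IH1 | /IH2] /(_ r r_phi); lia.
- by case=> [[g [/IH1 + _]] | [_ /IH2]] => /(_ r r_phi); lia.
- case=> /(Permutation_in r) /(_ r_phi) r_e1e2 _.
  by case: r_e1e2 => [<- | [<- | []]]; lia.
- by case=> g [/IH1 /(_ r r_phi) ? _]; lia.
Qed.

End ParDepth.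

Theorem lemma7p14 (Sigma : finType) : fork_acyclic (syntacticPA Sigma).
Proof.
apply: (@fork_acyclic_of_rank _ (syntacticPA Sigma) (@par_depth Sigma)).
- exact: par_depth_delta.
- exact: par_depth_gamma.
- exact: par_depth_fork.
Qed.
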